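(* Every rectangular satin has even order $n$. If $n\equiv 2 \pmod 4$, the satin belongs to species $26_o$; if $4\mid n$, it belongs to species $26_e$.
   Context: A prefabric consists of two perpendicular layers of unit-width strands, warps (vertical) and wefts (horizontal). The plane is divided into unit square cells. Each cell is dark if the warp is on top (seen from the front) and pale otherwise. A symmetry is an isometry of the plane, possibly combined with the side reversal $\tau$, that preserves the prefabric. $G_1$ denotes the planar part of the symmetry group, and $H_1$ its side-preserving subgroup. The $(n,s)$ satin, with $1<s<n-1$ and $\gcd(n,s)=1$, is the design of period $n$ in which row $i$ has its single dark cell in column $is \bmod n$. It is isonemal iff $s^2\equiv\pm1\pmod n$. It is square iff $s^2\equiv -1 \pmod n$. A non-square isonemal satin is called rectangular if $n$ is even and $s^2\equiv 1\pmod{2n}$. A prefabric belongs to species 26 if: - $G_1$ is of crystallographic type $pmm$, with mirrors at $45^\circ$ to the strands, every mirror symmetry being combined with $\tau$; - $H_1$ is of type $p2$, consisting of translations and side-preserving half-turns; - some half-turn centres lie at cell centres and others at cell corners. Within species 26: - Species $26_o$: every mirror carries half-turn centres alternately at cell centres and cell corners. Equivalently, a quarter of the $G_1$ lattice unit measures $a\delta$ by $b\delta$ with $a,b$ both odd, where $\delta$ is the length of a cell diagonal. - Species $26_e$: the mirrors in one direction contain alternately only cell-centre and only cell-corner half-turn centres, while the mirrors in the other direction each contain both kinds alternately. Equivalently, the corresponding dimensions are $a\delta$ by $b\delta$ with $a$ odd and $b$ even. *)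

From Stdlib Require Import ZArith Bool.
Open Scope Z_scope.

(* A design: [d x y = true] iff the cell in column [x], row [y]
   (the unit square [x,x+1] x [y,y+1]) is dark, i.e. the warp (vertical
   strand) is on top as seen from the front. *)
Definition design := Z -> Z -> bool.

Definition satin (n s : Z) : design := fun x y => (x - y * s) mod n =? 0.

(* Points of the plane are written in DOUBLED coordinates: the point (u,v)
   denotes (u/2, v/2).  Cell (x,y) has centre (2x+1, 2y+1); cell corners are
   the points with both coordinates even. *)
Definition point := (Z * Z)%type.

(* Linear parts: signed permutation matrices (the dihedral group of order 8):
   first swap the coordinates if [sw], then negate the first coordinate if
   [nx] and the second if [ny]. *)
Record lin := Lin { sw : bool; nx : bool; ny : bool }.

Definition lin_app (a : lin) (p : point) : point :=
  let q := if sw a then (snd p, fst p) else p in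
  ((if nx a then - fst q else fst q), (if ny a then - snd q else snd q)).

Definition lin_id  := Lin false false false.
Definition lin_neg := Lin false true true.
Definition lin_D   := Lin true false false.
Definition lin_mD  := Lin true true true.

(* orientation reversing linear part (determinant -1) *)
Definition lin_rev (a : lin) : bool := xorb (sw a) (xorb (nx a) (ny a)).

Record isom := Isom { ilin : lin; tr : point }.

Definition app (g : isom) (p : point) : point :=
  let q := lin_app (ilin g) p in (fst q + fst (tr g), snd q + snd (tr g)).

(* g maps cells to cells (centres of cells to centres of cells) *)
Definition grid_preserving (g : isom) : Prop :=
  Z.even (fst (tr g)) = true /\ Z.even (snd (tr g)) = true.

Definition cell_of (p : point) : Z * Z := ((fst p - 1) / 2, (snd p - 1) / 2).

(* (g, tau) is a symmetry of the prefabric with design d: g maps the cell c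
   to the cell g(c); the strand on top at g(c) must be the image of the
   strand on top at c (after turning the fabric over if tau = true).  Since an
   isometry that exchanges the two strand directions maps warps to wefts, and
   the side reversal tau also reverses which strand is on top, the colour of
   g(c) is the colour of c complemented once for each of these. *)
Definition is_sym (d : design) (g : isom) (tau : bool) : Prop :=
  grid_preserving g /\
  forall x y : Z,
    let c := cell_of (app g (2 * x + 1, 2 * y + 1)) in
    d (fst c) (snd c) = xorb (d x y) (xorb (sw (ilin g)) tau).

Definition G1 (d : design) (g : isom) : Prop := exists tau, is_sym d g tau.
Definition H1 (d : design) (g : isom) : Prop := is_sym d g false.

Definition is_translation (g : isom) : Prop := ilin g = lin_id.
Definition is_halfturn (g : isom) : Prop := ilin g = lin_neg.
Definition is_reflection (g : isom) : Prop :=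
  lin_rev (ilin g) = true /\ exists p, app g p = p.

Definition rank2_translations (G : isom -> Prop) : Prop :=
  exists g h, G g /\ G h /\ is_translation g /\ is_translation h /\
    fst (tr g) * snd (tr h) - snd (tr g) * fst (tr h) <> 0.

(* G is of type pmm with mirrors at 45 degrees to the strands:
   a wallpaper group (rank-2 translation lattice; discreteness is automatic
   here) whose point group is {1, -1, D, -D} (D, -D the reflections in the
   diagonals), containing genuine reflections in both diagonal directions
   (this excludes pmg, pgg) and whose translation lattice is primitive
   rectangular with respect to the mirror directions (this excludes cmm). *)
Definition pmm45 (G : isom -> Prop) : Prop :=
  rank2_translations G /\
  (forall g, G g -> ilin g = lin_id \/ ilin g = lin_neg \/
                    ilin g = lin_D \/ ilin g = lin_mD) /\
  (exists g, G g /\ ilin g = lin_D /\ is_reflection g) /\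
  (exists g, G g /\ ilin g = lin_mD /\ is_reflection g) /\
  (forall g, G g -> is_translation g ->
     exists a b, G (Isom lin_id (a, a)) /\ G (Isom lin_id (b, - b)) /\
                 tr g = (a + b, a - b)).

Definition p2 (G : isom -> Prop) : Prop :=
  rank2_translations G /\
  (forall g, G g -> is_translation g \/ is_halfturn g) /\
  (exists g, G g /\ is_halfturn g).

Definition is_cell_centre (p : point) : Prop :=
  Z.odd (fst p) = true /\ Z.odd (snd p) = true.
Definition is_cell_corner (p : point) : Prop :=
  Z.even (fst p) = true /\ Z.even (snd p) = true.

Definition htc (d : design) (p : point) : Prop :=
  H1 d (Isom lin_neg (2 * fst p, 2 * snd p)).

Definition on_line (dir : bool) (k : Z) (p : point) : Prop :=
  if dir then fst p + snd p = k else fst p - snd p = k.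

Definition refl (dir : bool) (k : Z) : isom :=
  if dir then Isom lin_mD (k, k) else Isom lin_D (k, - k).

Definition mirror (d : design) (dir : bool) (k : Z) : Prop := G1 d (refl dir k).

(* p, q are consecutive half-turn centres along the line (the lines are
   graphs over the first coordinate, which orders them) *)
Definition consecutive (d : design) (dir : bool) (k : Z) (p q : point) : Prop :=
  on_line dir k p /\ on_line dir k q /\ htc d p /\ htc d q /\
  fst p < fst q /\
  ~ (exists r, on_line dir k r /\ htc d r /\ fst p < fst r < fst q).

Definition alternating_line (d : design) (dir : bool) (k : Z) : Prop :=
  (exists p, on_line dir k p /\ htc d p) /\
  (forall p, on_line dir k p -> htc d p -> is_cell_centre p \/ is_cell_corner p) /\
  (forall p q, consecutive d dir k p q -> (is_cell_centre p <-> is_cell_corner q)).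

Definition pure_line (d : design) (dir : bool) (k : Z) (K : point -> Prop) : Prop :=
  (exists p, on_line dir k p /\ htc d p) /\
  (forall p, on_line dir k p -> htc d p -> K p).

Definition species26 (d : design) : Prop :=
  pmm45 (G1 d) /\
  (forall g tau, is_sym d g tau -> is_reflection g -> tau = true) /\
  p2 (H1 d) /\
  (exists p, htc d p /\ is_cell_centre p) /\
  (exists p, htc d p /\ is_cell_corner p).

Definition species26o (d : design) : Prop :=
  species26 d /\
  forall dir k, mirror d dir k -> alternating_line d dir k.

Definition species26e (d : design) : Prop :=
  species26 d /\
  exists dir0 : bool,
    (forall k, mirror d (negb dir0) k -> alternating_line d (negb dir0) k) /\
    (forall k, mirror d dir0 k ->
       pure_line d dir0 k is_cell_centre \/ pure_line d dir0 k is_cell_corner) /\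
    (forall k k', mirror d dir0 k -> mirror d dir0 k' -> k < k' ->
       ~ (exists k'', mirror d dir0 k'' /\ k < k'' < k') ->
       (pure_line d dir0 k is_cell_centre <-> pure_line d dir0 k' is_cell_corner)).

Definition satin_params (n s : Z) : Prop := 1 < s < n - 1 /\ Z.gcd n s = 1.
Definition satin_isonemal (n s : Z) : Prop :=
  (s * s - 1) mod n = 0 \/ (s * s + 1) mod n = 0.
Definition satin_square (n s : Z) : Prop := (s * s + 1) mod n = 0.
Definition satin_rectangular (n s : Z) : Prop :=
  satin_params n s /\ satin_isonemal n s /\ ~ satin_square n s /\
  Z.even n = true /\ (2 * n | s * s - 1).

From Stdlib Require Import ZArith Lia Bool.
Open Scope Z_scope.

(* The dark cells of the (n,s) satin are the cells c = (x,y) with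
   n | x - y s; they form a lattice of index n.  A grid-preserving isometry
   with linear part A sends a cell c to A c + t, so a symmetry maps dark cells
   to dark cells (it cannot exchange the colours, since dark cells are too
   sparse).  For a rectangular satin (s odd, gcd(n,s) = 1, n not dividing
   s^2+1, 2n | s^2-1) this yields a complete description of the symmetries:
   (g,tau) is a symmetry iff A is one of 1, -1, D, -D, tau is set exactly when
   A exchanges warps and wefts, and g sends the cell (0,0) to a dark cell.
   Every species-26 property is read off from this description.
   Next, the mirrors of slope 1 (resp. -1) are the lines 2j with j in an
   arithmetic progression of step Q = n/gcd(n,s+1) (resp. P = n/gcd(n,s-1)),
   and the half-turn centres on such a mirror form a progression of step P
   (resp. Q).  Centres alternate between cell centres and corners along a
   mirror exactly when the step is odd.  A parity analysis shows that P and Q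
   are both odd when n = 2 (mod 4) (species 26_o) and of opposite parity when
   4 | n (species 26_e, the pure mirrors being those carrying the even step). *)

(* The t with n | c t are exactly the multiples of the period n / gcd(n,c). *)
Definition period (n c : Z) : Z := n / Z.gcd n c.

Lemma gcd_pos n c : 0 < n -> 0 < Z.gcd n c.
Proof.
  intro Hn. pose proof (Z.gcd_nonneg n c) as Hge.
  destruct (Z.eq_dec (Z.gcd n c) 0) as [E|E]; [apply Z.gcd_eq_0_l in E|]; lia.
Qed.

Lemma period_pos n c : 0 < n -> 0 < period n c.
Proof.
  intro Hn. unfold period. pose proof (gcd_pos n c Hn) as Hg.
  destruct (Z.gcd_divide_l n c) as [p Hp].
  rewrite Hp at 1. rewrite Z.div_mul by lia. nia.
Qed.

Lemma divide_mul_iff_period n c t : 0 < n -> ((n | c * t) <-> (period n c | t)).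
Proof.
  intro Hn. unfold period. set (g := Z.gcd n c).
  pose proof (gcd_pos n c Hn) as Hg. fold g in Hg.
  destruct (Z.gcd_divide_l n c) as [p Hp]. destruct (Z.gcd_divide_r n c) as [c' Hc].
  fold g in Hp, Hc.
  assert (Hcop : Z.gcd p c' = 1).
  { assert (E : g = Z.gcd p c' * g).
    { unfold g at 1. rewrite Hp at 1. rewrite Hc at 1. apply Z.gcd_mul_mono_r_nonneg; lia. }
    nia. }
  rewrite Hp at 2. rewrite Z.div_mul by lia. rewrite Hp, Hc.
  replace (c' * g * t) with (c' * t * g) by ring.
  rewrite Z.mul_divide_cancel_r by lia. split; intro H.
  - apply Z.gauss with c'; assumption.
  - apply Z.divide_mul_r; assumption.
Qed.

Lemma progression_next per c j j' :
  0 < per -> (per | j - c) -> (per | j' - c) -> j < j' ->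
  ~ (exists j'', (per | j'' - c) /\ j < j'' < j') -> j' = j + per.
Proof.
  intros Hp [a Ha] [b Hb] Hlt Hgap.
  assert (a < b) by nia.
  destruct (Z.eq_dec b (a + 1)) as [->|Hne]; [lia|].
  exfalso. apply Hgap. exists (j + per). split.
  - exists (a + 1). lia.
  - nia.
Qed.

Lemma odd_divisor_of_odd p m : Z.Odd m -> (p | m) -> Z.Odd p.
Proof.
  intros [u Hu] [x Hx].
  destruct (Z.Even_or_Odd p) as [[v Hv]|]; [exfalso; subst; nia | assumption].
Qed.

Lemma odd_divisor_of_double p m : Z.Odd p -> (p | 2 * m) -> (p | m).
Proof.
  intros [u Hu] [x Hx].
  destruct (Z.Even_or_Odd x) as [[w Hw]|[w Hw]]; [exists w; nia | exfalso; nia].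
Qed.

Lemma odd_iff_even_shift per x : Z.Odd per -> (Z.Odd x <-> Z.Even (x + per)).
Proof.
  intros [w Hw]. split.
  - intros [u Hu]. exists (u + w + 1). lia.
  - intros [u Hu]. destruct (Z.Even_or_Odd x) as [[v Hv]|]; [exfalso; lia | assumption].
Qed.

Definition cell_image (g : isom) (c : Z * Z) : Z * Z :=
  cell_of (app g (2 * fst c + 1, 2 * snd c + 1)).

Definition vadd (c c' : Z * Z) : Z * Z := (fst c + fst c', snd c + snd c').

Lemma cell_image_affine g c : grid_preserving g ->
  cell_image g c = vadd (lin_app (ilin g) c) (cell_image g (0, 0)).
Proof.
  destruct g as [a [t1 t2]], c as [x y]; intros [E1 E2]; cbn in E1, E2.
  apply Z.even_spec in E1, E2; destruct E1 as [m1 ->], E2 as [m2 ->].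
  destruct a as [[] [] []]; unfold cell_image, cell_of, app, vadd, lin_app;
    cbn [fst snd sw nx ny ilin tr]; f_equal; Z.div_mod_to_equations; lia.
Qed.

Lemma cell_image_origin a u v :
  cell_image (Isom a (2 * u, 2 * v)) (0, 0) = (u - Z.b2z (nx a), v - Z.b2z (ny a)).
Proof.
  destruct a as [[] [] []]; unfold cell_image, cell_of, app, lin_app;
    cbn [fst snd sw nx ny ilin tr Z.b2z]; f_equal; Z.div_mod_to_equations; lia.
Qed.

Definition diag_point_group (a : lin) : Prop :=
  a = lin_id \/ a = lin_neg \/ a = lin_D \/ a = lin_mD.

Lemma diag_point_group_involutive a c : diag_point_group a -> lin_app a (lin_app a c) = c.
Proof.
  destruct c as [x y]; intros [-> | [-> | [-> | ->]]]; unfold lin_app;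
    cbn [lin_id lin_neg lin_D lin_mD sw nx ny fst snd]; f_equal; ring.
Qed.

Lemma grid_preserving_even a u v : grid_preserving (Isom a (2 * u, 2 * v)).
Proof. split; cbn [tr fst snd]; rewrite Z.even_mul; reflexivity. Qed.

Lemma refl_is_reflection dir k : is_reflection (refl dir k).
Proof.
  split; [destruct dir; reflexivity|]. exists (k, 0).
  destruct dir; unfold refl, app, lin_app; cbn [ilin tr lin_D lin_mD sw nx ny fst snd]; f_equal; ring.
Qed.

Definition line_point (dir : bool) (k X : Z) : point := (X, if dir then k - X else X - k).

Lemma line_point_on dir k X : on_line dir k (line_point dir k X).
Proof. destruct dir; unfold on_line, line_point; cbn [fst snd]; ring. Qed.

Lemma centre_on_line dir j r : on_line dir (2 * j) r ->
  (is_cell_centre r <-> Z.Odd (fst r)).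
Proof.
  destruct r as [X Y]; unfold on_line, is_cell_centre; cbn [fst snd]; intro Hl.
  rewrite !Z.odd_spec. split; [tauto|]. intros [u Hu]. split; [exists u; lia|].
  destruct dir; [exists (j - u - 1) | exists (u - j)]; lia.
Qed.

Lemma corner_on_line dir j r : on_line dir (2 * j) r ->
  (is_cell_corner r <-> Z.Even (fst r)).
Proof.
  destruct r as [X Y]; unfold on_line, is_cell_corner; cbn [fst snd]; intro Hl.
  rewrite !Z.even_spec. split; [tauto|]. intros [u Hu]. split; [exists u; lia|].
  destruct dir; [exists (j - u) | exists (u - j)]; lia.
Qed.

Lemma alternating_of_progression d dir j c per : 0 < per -> Z.Odd per ->
  (forall r, on_line dir (2 * j) r -> (htc d r <-> (per | fst r - c))) ->
  alternating_line d dir (2 * j).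
Proof.
  intros Hp Ho Hh. split; [|split].
  - exists (line_point dir (2 * j) c). split; [apply line_point_on|].
    apply Hh; [apply line_point_on|]. cbn [line_point fst]. rewrite Z.sub_diag.
    apply Z.divide_0_r.
  - intros r Hl _. rewrite (centre_on_line dir j r Hl), (corner_on_line dir j r Hl).
    destruct (Z.Even_or_Odd (fst r)); tauto.
  - intros p q (Hlp & Hlq & Hpp & Hqq & Hlt & Hgap).
    assert (Hq : fst q = fst p + per).
    { apply (progression_next per c); [exact Hp | apply Hh; auto | apply Hh; auto | exact Hlt |].
      intros (X & HX & Hbetween). apply Hgap. exists (line_point dir (2 * j) X).
      split; [apply line_point_on|]. split; [apply Hh; [apply line_point_on | exact HX]|].
      exact Hbetween. }
    rewrite (centre_on_line dir j p Hlp), (corner_on_line dir j q Hlq), Hq.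
    apply odd_iff_even_shift; exact Ho.
Qed.

Lemma pure_of_progression d dir j c per : 0 < per -> Z.Even per ->
  (forall r, on_line dir (2 * j) r -> (htc d r <-> (per | fst r - c))) ->
  (pure_line d dir (2 * j) is_cell_centre <-> Z.Odd c) /\
  (pure_line d dir (2 * j) is_cell_corner <-> Z.Even c).
Proof.
  intros Hp [w Hw] Hh.
  set (r0 := line_point dir (2 * j) c).
  assert (Hr0 : on_line dir (2 * j) r0 /\ htc d r0).
  { split; [apply line_point_on|]. apply Hh; [apply line_point_on|].
    cbn [r0 line_point fst]. rewrite Z.sub_diag. apply Z.divide_0_r. }
  assert (Hsame : forall r, on_line dir (2 * j) r -> htc d r ->
                  exists z, fst r = c + 2 * z).
  { intros r Hl Hr. apply Hh in Hr; [|exact Hl]. destruct Hr as [z Hz].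
    exists (z * w). lia. }
  split; split.
  - intros [_ Hall]. specialize (Hall r0 (proj1 Hr0) (proj2 Hr0)).
    rewrite (centre_on_line dir j r0 (proj1 Hr0)) in Hall. exact Hall.
  - intros [u Hu]. split; [exists r0; exact Hr0|]. intros r Hl Hr.
    rewrite (centre_on_line dir j r Hl). destruct (Hsame r Hl Hr) as [z Hz].
    exists (u + z). lia.
  - intros [_ Hall]. specialize (Hall r0 (proj1 Hr0) (proj2 Hr0)).
    rewrite (corner_on_line dir j r0 (proj1 Hr0)) in Hall. exact Hall.
  - intros [u Hu]. split; [exists r0; exact Hr0|]. intros r Hl Hr.
    rewrite (corner_on_line dir j r Hl). destruct (Hsame r Hl Hr) as [z Hz].
    exists (u + z). lia.
Qed.

Definition mirror_lattice (d : design) (dir : bool) (spacing cm step offset : Z) : Prop :=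
  (forall k, mirror d dir k <-> exists j, k = 2 * j /\ (spacing | j - cm)) /\
  (forall j r, (spacing | j - cm) -> on_line dir (2 * j) r ->
     (htc d r <-> (step | fst r - (j + offset)))).

Lemma alternating_of_mirror_lattice d dir spacing cm step offset :
  mirror_lattice d dir spacing cm step offset -> 0 < step -> Z.Odd step ->
  forall k, mirror d dir k -> alternating_line d dir k.
Proof.
  intros [Hm Hh] Hp Ho k Hk. apply Hm in Hk. destruct Hk as (j & -> & Hj).
  apply (alternating_of_progression d dir j (j + offset) step); auto.
Qed.

Lemma pure_of_mirror_lattice d dir spacing cm step offset :
  mirror_lattice d dir spacing cm step offset ->
  0 < spacing -> Z.Odd spacing -> 0 < step -> Z.Even step ->
  (forall k, mirror d dir k ->
     pure_line d dir k is_cell_centre \/ pure_line d dir k is_cell_corner) /\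
  (forall k k', mirror d dir k -> mirror d dir k' -> k < k' ->
     ~ (exists k'', mirror d dir k'' /\ k < k'' < k') ->
     (pure_line d dir k is_cell_centre <-> pure_line d dir k' is_cell_corner)).
Proof.
  intros [Hm Hh] Hsp Hso Hp He.
  assert (Hkind : forall j, (spacing | j - cm) ->
    (pure_line d dir (2 * j) is_cell_centre <-> Z.Odd (j + offset)) /\
    (pure_line d dir (2 * j) is_cell_corner <-> Z.Even (j + offset))).
  { intros j Hj. apply (pure_of_progression d dir j (j + offset) step); auto. }
  split.
  - intros k Hk. apply Hm in Hk. destruct Hk as (j & -> & Hj).
    destruct (Hkind j Hj) as [Hc Hr].
    destruct (Z.Even_or_Odd (j + offset)); [right; apply Hr | left; apply Hc]; assumption.
  - intros k k' Hk Hk' Hlt Hgap.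
    apply Hm in Hk. destruct Hk as (j & -> & Hj).
    apply Hm in Hk'. destruct Hk' as (j' & -> & Hj').
    assert (Hnext : j' = j + spacing).
    { apply (progression_next spacing cm); auto; [lia|].
      intros (j'' & Hj'' & Hbetween). apply Hgap. exists (2 * j'').
      split; [apply Hm; exists j''; auto | lia]. }
    subst j'. rewrite (proj1 (Hkind j Hj)), (proj2 (Hkind (j + spacing) Hj')).
    replace (j + spacing + offset) with (j + offset + spacing) by ring.
    apply odd_iff_even_shift; exact Hso.
Qed.

(** * The lattice of dark cells *)

Definition dark (n s : Z) (c : Z * Z) : Prop := (n | fst c - snd c * s).

Lemma satin_dark n s c : 0 < n -> (satin n s (fst c) (snd c) = true <-> dark n s c).
Proof. intro Hn. unfold satin, dark. rewrite Z.eqb_eq. apply Z.mod_divide. lia. Qed.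

Lemma dark_shift n s c t : dark n s t -> (dark n s (vadd c t) <-> dark n s c).
Proof.
  unfold dark, vadd; cbn [fst snd]; intro Ht.
  replace (fst c + fst t - (snd c + snd t) * s)
    with ((fst t - snd t * s) + (fst c - snd c * s)) by ring.
  split; intro H; [exact (Z.divide_add_cancel_r _ _ _ Ht H) | exact (Z.divide_add_r _ _ _ Ht H)].
Qed.

Lemma not_divide_small n e : 0 < Z.abs e < n -> ~ (n | e).
Proof. intros He H. apply Z.divide_abs_r, Z.divide_pos_le in H; lia. Qed.

Section RectangularSatin.

Variables n s : Z.
Hypothesis s_range : 1 < s < n - 1.
Hypothesis coprime_n_s : Z.gcd n s = 1.
Hypothesis not_square : ~ (n | s * s + 1).
Hypothesis rectangular : (2 * n | s * s - 1).
Hypothesis n_even : Z.even n = true.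

Lemma n_pos : 0 < n.
Proof. lia. Qed.

(* s is odd, being coprime to the even n. *)
Lemma s_odd : Z.Odd s.
Proof.
  destruct (Z.Even_or_Odd s) as [[u Hu]|]; [exfalso|assumption].
  apply Z.even_spec in n_even. destruct n_even as [v Hv].
  assert (H2 : (2 | Z.gcd n s)) by (apply Z.gcd_greatest; [exists v | exists u]; lia).
  rewrite coprime_n_s in H2. apply Z.divide_pos_le in H2; lia.
Qed.

(* Writing s = 2a+1 and n = 2m, the condition 2n | s^2 - 1 says m | a(a+1). *)
Lemma rectangular_normal_form :
  exists a m k, s = 2 * a + 1 /\ n = 2 * m /\ a * (a + 1) = k * m.
Proof.
  destruct s_odd as [a Ha]. pose proof n_even as He.
  apply Z.even_spec in He. destruct He as [m Hm]. destruct rectangular as [k Hk].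
  exists a, m, k. repeat split; [exact Ha | exact Hm | subst; lia].
Qed.

Lemma isonemal_divide : (n | s * s - 1).
Proof. destruct rectangular as [k Hk]. exists (2 * k). lia. Qed.

Lemma diag_point_group_dark a c :
  diag_point_group a -> (dark n s (lin_app a c) <-> dark n s c).
Proof.
  intro Ha.
  assert (Hpres : forall c', dark n s c' -> dark n s (lin_app a c')).
  { intros [x y]; unfold dark. pose proof isonemal_divide as Hd.
    destruct Ha as [-> | [-> | [-> | ->]]]; unfold lin_app;
      cbn [lin_id lin_neg lin_D lin_mD sw nx ny fst snd]; intro H.
    - exact H.
    - replace (- x - - y * s) with (- (x - y * s)) by ring. apply Z.divide_opp_r, H.
    - replace (y - x * s) with ((x - y * s) * (- s) + (- y) * (s * s - 1)) by ring.
      apply Z.divide_add_r; [apply Z.divide_mul_l | apply Z.divide_mul_r]; assumption.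
    - replace (- y - - x * s) with (- ((x - y * s) * (- s) + (- y) * (s * s - 1))) by ring.
      apply Z.divide_opp_r, Z.divide_add_r; [apply Z.divide_mul_l | apply Z.divide_mul_r];
        assumption. }
  split; [|apply Hpres]. intro H. rewrite <- (diag_point_group_involutive a c Ha). apply Hpres, H.
Qed.

(* Conversely, a linear part sending the dark cell (s,1) to a dark cell lies in
   the point group: the other four would force n | 2s or n | s^2 + 1. *)
Lemma point_group_of_dark a : dark n s (lin_app a (s, 1)) -> diag_point_group a.
Proof.
  unfold dark, diag_point_group. pose proof isonemal_divide as Hd.
  assert (H2s : ~ (n | s * 2)).
  { intro H. apply Z.gauss in H; [|exact coprime_n_s]. apply Z.divide_pos_le in H; lia. }
  destruct a as [[] [] []]; unfold lin_app; cbn [sw nx ny fst snd]; intro H;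
    try (left; reflexivity); try (right; left; reflexivity);
    try (right; right; left; reflexivity); try (right; right; right; reflexivity);
    exfalso.
  - apply not_square. replace (s * s + 1) with (- (- 1 - s * s)) by ring.
    apply Z.divide_opp_r, H.
  - apply not_square. replace (s * s + 1) with (1 - - s * s) by ring. exact H.
  - apply H2s. replace (s * 2) with (- (- s - 1 * s)) by ring. apply Z.divide_opp_r, H.
  - apply H2s. replace (s * 2) with (s - - (1) * s) by ring. exact H.
Qed.

Lemma unit_not_dark a : ~ dark n s (lin_app a (1, 0)).
Proof.
  unfold dark. destruct a as [[] [] []]; unfold lin_app; cbn [sw nx ny fst snd];
    apply not_divide_small; lia.
Qed.

(** The symmetries of the satin *)

Lemma no_colour_exchange g : grid_preserving g ->
  ~ (forall c, satin n s (fst (cell_image g c)) (snd (cell_image g c)) =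
               negb (satin n s (fst c) (snd c))).
Proof.
  intros Hgp Hflip.
  assert (Hdark : forall x, 0 < x < n -> dark n s (cell_image g (x, 0))).
  { intros x Hx. apply satin_dark; [exact n_pos|]. rewrite (Hflip (x, 0)).
    unfold satin; cbn [fst snd]. rewrite Z.mul_0_l, Z.sub_0_r, Z.mod_small by lia.
    destruct x; [lia | reflexivity | lia]. }
  assert (Hstep : cell_image g (2, 0) = vadd (lin_app (ilin g) (1, 0)) (cell_image g (1, 0))).
  { rewrite (cell_image_affine g (2, 0) Hgp), (cell_image_affine g (1, 0) Hgp).
    destruct (ilin g) as [[] [] []]; unfold vadd, lin_app; cbn [sw nx ny fst snd];
      f_equal; ring. }
  apply (unit_not_dark (ilin g)). rewrite <- (dark_shift n s _ (cell_image g (1, 0)));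
    [rewrite <- Hstep|]; apply Hdark; lia.
Qed.

Lemma colour_preserving_iff g : grid_preserving g ->
  ((forall c, satin n s (fst (cell_image g c)) (snd (cell_image g c)) =
              satin n s (fst c) (snd c)) <->
   diag_point_group (ilin g) /\ dark n s (cell_image g (0, 0))).
Proof.
  intro Hgp. split.
  - intro Hcol.
    assert (Hdark : forall c, dark n s c -> dark n s (cell_image g c)).
    { intros c Hc. apply satin_dark; [exact n_pos|]. rewrite Hcol. apply satin_dark; auto using n_pos. }
    assert (H0 : dark n s (cell_image g (0, 0))) by (apply Hdark; exists 0; reflexivity).
    split; [|exact H0]. apply point_group_of_dark.
    rewrite <- (dark_shift n s _ _ H0), <- (cell_image_affine g _ Hgp).
    apply Hdark. exists 0. cbn [fst snd]. ring.
  - intros [Hpg H0] c. apply eq_true_iff_eq. rewrite !satin_dark by exact n_pos.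
    rewrite (cell_image_affine g c Hgp), (dark_shift n s _ _ H0).
    apply diag_point_group_dark, Hpg.
Qed.

Lemma satin_sym_iff g tau :
  is_sym (satin n s) g tau <->
  grid_preserving g /\ tau = sw (ilin g) /\ diag_point_group (ilin g) /\
  dark n s (cell_image g (0, 0)).
Proof.
  split.
  - intros [Hgp Hcol]. destruct (xorb (sw (ilin g)) tau) eqn:Hflip.
    + exfalso. apply (no_colour_exchange g Hgp). intros [x y].
      specialize (Hcol x y). cbv zeta in Hcol. rewrite xorb_true_r in Hcol. exact Hcol.
    + assert (Htau : tau = sw (ilin g))
        by (destruct tau, (sw (ilin g)); cbn in Hflip; congruence).
      split; [exact Hgp|]. split; [exact Htau|]. apply colour_preserving_iff; [exact Hgp|].
      intros [x y]. specialize (Hcol x y). cbv zeta in Hcol.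
      rewrite xorb_false_r in Hcol. exact Hcol.
  - intros (Hgp & -> & Hpg & H0). split; [exact Hgp|]. intros x y. cbv zeta.
    rewrite xorb_nilpotent, xorb_false_r.
    exact (proj2 (colour_preserving_iff g Hgp) (conj Hpg H0) (x, y)).
Qed.

Lemma satin_translation x y : dark n s (x, y) -> H1 (satin n s) (Isom lin_id (2 * x, 2 * y)).
Proof.
  intro Hd. apply satin_sym_iff. rewrite cell_image_origin. cbn [lin_id nx ny Z.b2z ilin sw].
  rewrite !Z.sub_0_r. split; [apply grid_preserving_even|].
  split; [reflexivity|]. split; [left; reflexivity | exact Hd].
Qed.

Lemma htc_satin r : htc (satin n s) r <-> dark n s (fst r - 1, snd r - 1).
Proof.
  unfold htc, H1. rewrite satin_sym_iff, cell_image_origin.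
  cbn [lin_neg nx ny Z.b2z ilin sw]. split; [intros (_ & _ & _ & H); exact H|].
  intro H. split; [apply grid_preserving_even|].
  split; [reflexivity|]. split; [right; left; reflexivity | exact H].
Qed.

(** Mirrors and the half-turn centres on them *)

Lemma mirror_slope1_satin k :
  mirror (satin n s) false k <-> exists j, k = 2 * j /\ (n | (s + 1) * j).
Proof.
  unfold mirror, G1, refl. split.
  - intros [tau Hsym]. apply satin_sym_iff in Hsym. destruct Hsym as ([Hk _] & _ & _ & Hd).
    cbn [tr fst] in Hk. apply Z.even_spec in Hk. destruct Hk as [j ->].
    exists j. split; [reflexivity|].
    replace (- (2 * j)) with (2 * - j) in Hd by ring.
    rewrite cell_image_origin in Hd. unfold dark in Hd. cbn [lin_D nx ny Z.b2z fst snd] in Hd.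
    replace ((s + 1) * j) with (j - 0 - (- j - 0) * s) by ring. exact Hd.
  - intros (j & -> & Hj). exists true. apply satin_sym_iff.
    replace (- (2 * j)) with (2 * - j) by ring. rewrite cell_image_origin.
    split; [apply grid_preserving_even|]. split; [reflexivity|].
    split; [right; right; left; reflexivity|]. unfold dark. cbn [lin_D nx ny Z.b2z fst snd].
    replace (j - 0 - (- j - 0) * s) with ((s + 1) * j) by ring. exact Hj.
Qed.

Lemma mirror_slope_m1_satin k :
  mirror (satin n s) true k <-> exists j, k = 2 * j /\ (n | (s - 1) * (j - 1)).
Proof.
  unfold mirror, G1, refl. split.
  - intros [tau Hsym]. apply satin_sym_iff in Hsym. destruct Hsym as ([Hk _] & _ & _ & Hd).
    cbn [tr fst] in Hk. apply Z.even_spec in Hk. destruct Hk as [j ->].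
    exists j. split; [reflexivity|].
    rewrite cell_image_origin in Hd. unfold dark in Hd. cbn [lin_mD nx ny Z.b2z fst snd] in Hd.
    apply Z.divide_opp_r. replace (- ((s - 1) * (j - 1))) with (j - 1 - (j - 1) * s) by ring.
    exact Hd.
  - intros (j & -> & Hj). exists true. apply satin_sym_iff. rewrite cell_image_origin.
    split; [apply grid_preserving_even|]. split; [reflexivity|].
    split; [right; right; right; reflexivity|]. unfold dark. cbn [lin_mD nx ny Z.b2z fst snd].
    replace (j - 1 - (j - 1) * s) with (- ((s - 1) * (j - 1))) by ring.
    apply Z.divide_opp_r, Hj.
Qed.

Lemma htc_on_mirror_slope1 j r : (n | (s + 1) * j) -> on_line false (2 * j) r ->
  (htc (satin n s) r <-> (n | (s - 1) * (fst r - (j + 1)))).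
Proof.
  destruct r as [X Y]; unfold on_line; cbn [fst snd]; intros Hj Hl.
  rewrite htc_satin. unfold dark; cbn [fst snd].
  replace (X - 1 - (Y - 1) * s) with ((s + 1) * j + - ((s - 1) * (X - (j + 1)))) by
    (replace Y with (X - 2 * j) by lia; ring).
  split; intro H.
  - apply Z.divide_opp_r. exact (Z.divide_add_cancel_r _ _ _ Hj H).
  - apply Z.divide_add_r; [exact Hj | apply Z.divide_opp_r, H].
Qed.

Lemma htc_on_mirror_slope_m1 j r : (n | (s - 1) * (j - 1)) -> on_line true (2 * j) r ->
  (htc (satin n s) r <-> (n | (s + 1) * (fst r - (j + 0)))).
Proof.
  destruct r as [X Y]; unfold on_line; cbn [fst snd]; intros Hj Hl.
  rewrite htc_satin. unfold dark; cbn [fst snd].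
  replace (X - 1 - (Y - 1) * s) with (- ((s - 1) * (j - 1)) + (s + 1) * (X - (j + 0))) by
    (replace Y with (2 * j - X) by lia; ring).
  apply Z.divide_opp_r in Hj. split; intro H.
  - exact (Z.divide_add_cancel_r _ _ _ Hj H).
  - apply Z.divide_add_r; assumption.
Qed.

Lemma satin_mirror_lattice_slope1 :
  mirror_lattice (satin n s) false (period n (s + 1)) 0 (period n (s - 1)) 1.
Proof.
  split.
  - intro k. rewrite mirror_slope1_satin.
    split; intros (j & Hk & Hj); exists j; split; try exact Hk.
    + rewrite Z.sub_0_r. apply divide_mul_iff_period; [exact n_pos | exact Hj].
    + rewrite Z.sub_0_r in Hj. apply (divide_mul_iff_period n (s + 1) j n_pos), Hj.
  - intros j r Hj Hl. rewrite Z.sub_0_r in Hj.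
    rewrite (htc_on_mirror_slope1 j r); [|apply (divide_mul_iff_period n (s + 1) j n_pos), Hj | exact Hl].
    apply divide_mul_iff_period, n_pos.
Qed.

Lemma satin_mirror_lattice_slope_m1 :
  mirror_lattice (satin n s) true (period n (s - 1)) 1 (period n (s + 1)) 0.
Proof.
  split.
  - intro k. rewrite mirror_slope_m1_satin.
    split; intros (j & Hk & Hj); exists j; split; try exact Hk;
      apply (divide_mul_iff_period n (s - 1) (j - 1) n_pos), Hj.
  - intros j r Hj Hl.
    rewrite (htc_on_mirror_slope_m1 j r); [|apply (divide_mul_iff_period n (s - 1) (j - 1) n_pos), Hj | exact Hl].
    apply divide_mul_iff_period, n_pos.
Qed.

(* Every dark cell is the sum of a dark cell on the diagonal and one on the
   antidiagonal: the translation lattice is rectangular with respect to the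
   mirror directions. *)
Lemma dark_diagonal_decomposition x y : dark n s (x, y) ->
  exists w v, x = w + v /\ y = w - v /\ dark n s (w, w) /\ dark n s (v, - v).
Proof.
  unfold dark; cbn [fst snd]; intros [z Hz].
  destruct rectangular_normal_form as (a & m & k & Hs & Hn & Hk).
  exists (z * m + y * a + y), (z * m + y * a). cbn [fst snd].
  split; [rewrite <- (Z.sub_add (y * s) x), Hz; subst; ring|]. split; [ring|]. subst.
  split.
  - exists (- (a * z + k * y)).
    transitivity (- (a * z) * (2 * m) - 2 * y * (a * (a + 1))); [ring|]. rewrite Hk. ring.
  - exists ((a + 1) * z + k * y).
    transitivity ((a + 1) * z * (2 * m) + 2 * y * (a * (a + 1))); [ring|]. rewrite Hk. ring.
Qed.

Lemma satin_rank2 (G : isom -> Prop) :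
  (forall x y, dark n s (x, y) -> G (Isom lin_id (2 * x, 2 * y))) -> rank2_translations G.
Proof.
  intro HG. exists (Isom lin_id (2 * n, 2 * 0)), (Isom lin_id (2 * s, 2 * 1)).
  split; [apply HG; exists 1; cbn [fst snd]; ring|].
  split; [apply HG; exists 0; cbn [fst snd]; ring|].
  split; [reflexivity|]. split; [reflexivity|]. cbn [tr fst snd]. lia.
Qed.

Lemma satin_pmm45 : pmm45 (G1 (satin n s)).
Proof.
  split; [|split; [|split; [|split]]].
  - apply satin_rank2. intros x y Hd. exists false. apply satin_translation, Hd.
  - intros g [tau Hsym]. apply satin_sym_iff in Hsym. destruct Hsym as (_ & _ & Hpg & _).
    exact Hpg.
  - exists (refl false 0). split; [|split; [reflexivity | apply refl_is_reflection]].
    apply mirror_slope1_satin. exists 0. split; [reflexivity | exists 0; ring].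
  - exists (refl true 2). split; [|split; [reflexivity | apply refl_is_reflection]].
    apply mirror_slope_m1_satin. exists 1. split; [reflexivity | exists 0; ring].
  - intros [a [t1 t2]] [tau Hsym] Htr. unfold is_translation in Htr. cbn [ilin] in Htr. subst a.
    apply satin_sym_iff in Hsym. destruct Hsym as ([E1 E2] & _ & _ & Hd).
    cbn [tr fst snd] in E1, E2. apply Z.even_spec in E1, E2.
    destruct E1 as [x ->], E2 as [y ->].
    rewrite cell_image_origin in Hd. cbn [lin_id nx ny Z.b2z] in Hd. rewrite !Z.sub_0_r in Hd.
    destruct (dark_diagonal_decomposition x y Hd) as (w & v & -> & -> & Hw & Hv).
    exists (2 * w), (2 * v). split; [|split].
    + exists false. apply satin_translation, Hw.
    + exists false. replace (- (2 * v)) with (2 * - v) by ring. apply satin_translation, Hv.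
    + cbn [tr]. f_equal; ring.
Qed.

(* Reflections exchange warps and wefts, so they must turn the fabric over. *)
Lemma satin_reflections_reverse_sides g tau :
  is_sym (satin n s) g tau -> is_reflection g -> tau = true.
Proof.
  intros Hsym [Hrev _]. apply satin_sym_iff in Hsym. destruct Hsym as (_ & -> & Hpg & _).
  destruct Hpg as [E | [E | [E | E]]]; rewrite E in Hrev |- *; cbn in Hrev;
    [discriminate | discriminate | reflexivity | reflexivity].
Qed.

Lemma satin_p2 : p2 (H1 (satin n s)).
Proof.
  split; [|split].
  - apply satin_rank2. intros x y Hd. apply satin_translation, Hd.
  - intros g Hsym. apply satin_sym_iff in Hsym. destruct Hsym as (_ & Hsw & Hpg & _).
    unfold is_translation, is_halfturn.
    destruct Hpg as [E | [E | [E | E]]]; rewrite E in Hsw |- *; cbn in Hsw;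
      [left | right | discriminate | discriminate]; reflexivity.
  - exists (Isom lin_neg (2 * 1, 2 * 1)). split; [|reflexivity].
    apply (htc_satin (1, 1)). exists 0. cbn [fst snd]. ring.
Qed.

Lemma satin_species26 : species26 (satin n s).
Proof.
  split; [exact satin_pmm45|]. split; [exact satin_reflections_reverse_sides|].
  split; [exact satin_p2|]. split.
  - exists (1, 1). split; [|split; reflexivity]. apply htc_satin. exists 0. cbn [fst snd]. ring.
  - exists (1 - s, 0). split.
    + apply htc_satin. exists 0. cbn [fst snd]. ring.
    + destruct s_odd as [a Ha]. split; cbn [fst snd]; [|reflexivity].
      apply Z.even_spec. exists (- a). lia.
Qed.

(** Parity of the periods *)

Lemma periods_divide : exists a m, s = 2 * a + 1 /\ n = 2 * m /\
  (period n (s - 1) | m) /\ (period n (s + 1) | m) /\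
  (period n (s - 1) | a + 1) /\ (period n (s + 1) | a).
Proof.
  destruct rectangular_normal_form as (a & m & k & Hs & Hn & Hk).
  exists a, m. split; [exact Hs|]. split; [exact Hn|].
  repeat split; apply divide_mul_iff_period; try exact n_pos.
  - exists a. subst. ring.
  - exists (a + 1). subst. ring.
  - exists k. subst. nia.
  - exists k. subst. nia.
Qed.

Lemma periods_odd_of_mod4_2 : n mod 4 = 2 ->
  Z.Odd (period n (s - 1)) /\ Z.Odd (period n (s + 1)).
Proof.
  intro H4. destruct periods_divide as (a & m & _ & Hn & HP & HQ & _ & _).
  assert (Hm : Z.Odd m).
  { destruct (Z.Even_or_Odd m) as [[u Hu]|]; [exfalso | assumption].
    subst. Z.div_mod_to_equations. lia. }
  split; [exact (odd_divisor_of_odd _ _ Hm HP) | exact (odd_divisor_of_odd _ _ Hm HQ)].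
Qed.

Lemma periods_opposite_of_mod4_0 : n mod 4 = 0 ->
  (Z.Odd (period n (s - 1)) /\ Z.Even (period n (s + 1))) \/
  (Z.Even (period n (s - 1)) /\ Z.Odd (period n (s + 1))).
Proof.
  intro H4. destruct periods_divide as (a & m & Hs & Hn & HP & HQ & HPa & HQa).
  assert (Hm : Z.Even m).
  { destruct (Z.Even_or_Odd m) as [|[u Hu]]; [assumption | exfalso].
    subst. Z.div_mod_to_equations. lia. }
  destruct Hm as [m' Hm'].
  destruct (Z.Even_or_Odd (period n (s - 1))) as [EP | OP];
    destruct (Z.Even_or_Odd (period n (s + 1))) as [EQ | OQ]; auto; exfalso.
  - (* both even: 2 would divide the consecutive integers a and a + 1 *)
    destruct EP as [u Hu], EQ as [v Hv]. rewrite Hu in HPa. rewrite Hv in HQa.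
    destruct HPa as [x Hx], HQa as [y Hy]. lia.
  - (* both odd: then n | 2 m' = m, impossible as 0 < m < n *)
    rewrite Hm' in HP, HQ.
    apply odd_divisor_of_double, (divide_mul_iff_period n _ _ n_pos) in HP, HQ; auto.
    assert (Hm2 : (n | (s + 1) * m' - (s - 1) * m')) by (apply Z.divide_sub_r; assumption).
    replace ((s + 1) * m' - (s - 1) * m') with m in Hm2 by lia.
    apply Z.divide_pos_le in Hm2; lia.
Qed.

End RectangularSatin.

Theorem theorem1 (n s : Z) :
  satin_rectangular n s ->
  Z.even n = true /\
  (n mod 4 = 2 -> species26o (satin n s)) /\
  (n mod 4 = 0 -> species26e (satin n s)).
Proof.
  intros ([Hs Hg] & _ & Hnsq & Hev & Hdiv).
  assert (Hsq : ~ (n | s * s + 1))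
    by (intro D; apply Hnsq, Z.mod_divide; [lia | exact D]).
  assert (S26 : species26 (satin n s)) by (apply satin_species26; assumption).
  assert (M1 : mirror_lattice (satin n s) false (period n (s + 1)) 0 (period n (s - 1)) 1)
    by (apply satin_mirror_lattice_slope1; assumption).
  assert (M2 : mirror_lattice (satin n s) true (period n (s - 1)) 1 (period n (s + 1)) 0)
    by (apply satin_mirror_lattice_slope_m1; assumption).
  assert (HP : 0 < period n (s - 1)) by (apply period_pos; lia).
  assert (HQ : 0 < period n (s + 1)) by (apply period_pos; lia).
  split; [exact Hev|]. split; intro H4; split; try exact S26.
  - destruct (periods_odd_of_mod4_2 n s) as [OP OQ]; try assumption.
    intros [] k; [exact (alternating_of_mirror_lattice _ _ _ _ _ _ M2 HQ OQ k)
                 |exact (alternating_of_mirror_lattice _ _ _ _ _ _ M1 HP OP k)].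
  - destruct (periods_opposite_of_mod4_0 n s) as [[OP EQ] | [EP OQ]]; try assumption.
    + exists true. split; [exact (alternating_of_mirror_lattice _ _ _ _ _ _ M1 HP OP)|].
      exact (pure_of_mirror_lattice _ _ _ _ _ _ M2 HP OP HQ EQ).
    + exists false. split; [exact (alternating_of_mirror_lattice _ _ _ _ _ _ M2 HQ OQ)|].
      exact (pure_of_mirror_lattice _ _ _ _ _ _ M1 HQ OQ HP EP).
Qed.
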